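(* Let $\{e_1,\dots,e_n\}$ be a basis of the free abelian group $\mathbb Z^n$, and let $$\widetilde V=\{e_1,\dots,e_n\}\cup\{e_i-e_j:1\le i<j\le n\}.$$ For any $v,v_1,\dots,v_k\in\widetilde V$, if the subgroup of $\mathbb Z^n$ generated by $\{v_1,\dots,v_k\}$ contains some non-zero multiple of $v$, then it contains $v$. *)

From mathcomp Require Import all_boot all_order all_algebra.
Set Implicit Arguments. Unset Strict Implicit. Unset Printing Implicit Defensive.
Import Order.TTheory GRing.Theory Num.Theory.
Local Open Scope ring_scope.

(* A basis {e_1,...,e_n} of Z^n is given by the rows of a matrix E that is
   invertible over int (E \in unitmx, i.e. det E = +-1); e_i = row i E. *)

Definition Vtilde (n : nat) (E : 'M[int]_n) (v : 'rV[int]_n) : Prop :=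
  (exists i : 'I_n, v = row i E) \/
  (exists i j : 'I_n, (i < j)%N /\ v = row i E - row j E).

Definition in_subgroup (n k : nat) (vs : 'I_k -> 'rV[int]_n) (w : 'rV[int]_n) : Prop :=
  exists c : 'I_k -> int, w = \sum_(l < k) c l *: vs l.

(* The vectors of V~ are exactly the differences x_p - x_q of the n + 1
   "vertices" x_0 = 0, x_i = e_i.  Join two vertices by an edge when their
   difference is +-v_l for some generator v_l.  If p and q are connected, then
   x_p - x_q is a sum of such differences.  Otherwise, the linear form that is
   1 on the vertices connected to p and 0 on the others (it exists because the
   e_i form a basis, after shifting so that it vanishes at x_0) kills every
   v_l, hence the whole subgroup, but takes the value m on m (x_p - x_q). *)

From mathcomp Require Import all_boot all_order all_algebra.
Import GRing.Theory.
Set Implicit Arguments. Unset Strict Implicit. Unset Printing Implicit Defensive.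
Local Open Scope ring_scope.

Lemma row_mul_invmx (R : comUnitRingType) (n p : nat) (E : 'M[R]_n)
    (W : 'M[R]_(n, p)) (i : 'I_n) :
  E \in unitmx -> row i E *m (invmx E *m W) = row i W.
Proof. by move=> unitE; rewrite rowE mulmxA -(mulmxA _ E) mulmxV // mulmx1 -rowE. Qed.

Section Subgroup.

Variables (n k : nat) (vs : 'I_k -> 'rV[int]_n).

Lemma in_subgroup0 : in_subgroup vs 0.
Proof. by exists (fun _ => 0); rewrite big1 // => l _; rewrite scale0r. Qed.

Lemma in_subgroupD x y : in_subgroup vs x -> in_subgroup vs y -> in_subgroup vs (x + y).
Proof.
move=> [c ->] [d ->]; exists (fun l => c l + d l); rewrite -big_split.
by apply: eq_bigr => l _; rewrite scalerDl.
Qed.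

Lemma in_subgroupN x : in_subgroup vs x -> in_subgroup vs (- x).
Proof.
move=> [c ->]; exists (fun l => - c l); rewrite -sumrN.
by apply: eq_bigr => l _; rewrite scaleNr.
Qed.

Lemma in_subgroup_gen l : in_subgroup vs (vs l).
Proof.
exists (fun l' => (l' == l)%:R); rewrite (bigD1 l) //= eqxx scale1r big1 ?addr0 //.
by move=> l' /negbTE ->; rewrite scale0r.
Qed.

Lemma in_subgroup_mulmx_eq0 (u : 'cV[int]_n) w :
  (forall l, vs l *m u = 0) -> in_subgroup vs w -> w *m u = 0.
Proof.
move=> vs_u [c ->]; rewrite mulmx_suml big1 // => l _.
by rewrite -scalemxAl vs_u scaler0.
Qed.

Variable E : 'M[int]_n.

Definition vertex (p : option 'I_n) : 'rV[int]_n :=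
  if p is Some i then row i E else 0.

Lemma Vtilde_vertexB w : Vtilde E w -> exists p q, w = vertex p - vertex q.
Proof.
case=> [[i ->]|[i [j [_ ->]]]]; last by exists (Some i), (Some j).
by exists (Some i), None; rewrite subr0.
Qed.

Definition joined : rel (option 'I_n) := fun p q =>
  [exists l, (vs l == vertex p - vertex q) || (vs l == vertex q - vertex p)].

Lemma joined_sym : symmetric joined.
Proof. by move=> p q; apply/existsP/existsP => -[l h]; exists l; rewrite orbC. Qed.

Lemma in_subgroup_connect p q :
  connect joined p q -> in_subgroup vs (vertex p - vertex q).
Proof.
case/connectP=> s; elim: s p => [|r s IHs] p /=.
  by move=> _ ->; rewrite subrr; exact: in_subgroup0.
case/andP=> /existsP[l /orP[] /eqP vs_l] path_rs last_q.
  rewrite -(subrKA (vertex r)) -vs_l.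
  by apply: in_subgroupD; [exact: in_subgroup_gen | exact: IHs last_q].
rewrite -(subrKA (vertex r)) -opprB -vs_l.
by apply: in_subgroupD; [apply/in_subgroupN/in_subgroup_gen | exact: IHs last_q].
Qed.

Lemma connect_joined_eq a p q : joined p q -> connect joined a p = connect joined a q.
Proof.
move=> jpq; apply/idP/idP => /connect_trans; apply; apply: connect1 => //.
by rewrite joined_sym.
Qed.

Definition component_form (a : option 'I_n) : 'cV[int]_n :=
  invmx E *m \col_i ((connect joined a (Some i))%:R - (connect joined a None)%:R).

Hypothesis unitE : E \in unitmx.

Lemma vertex_mul_component_form a p :
  vertex p *m component_form a =
  ((connect joined a p)%:R - (connect joined a None)%:R)%:M.
Proof.
apply/matrixP => i j; rewrite !ord1 [RHS]mxE eqxx mulr1n.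
case: p => [i'|] /=; last by rewrite mul0mx !mxE subrr.
by rewrite row_mul_invmx // !mxE.
Qed.

Lemma joined_mul_component_form a p q :
  joined p q -> (vertex p - vertex q) *m component_form a = 0.
Proof.
move=> jpq; rewrite mulmxBl !vertex_mul_component_form.
by rewrite (connect_joined_eq a jpq) subrr.
Qed.

End Subgroup.

Theorem propositionA1 (n : nat) (E : 'M[int]_n) (hE : E \in unitmx)
  (k : nat) (v : 'rV[int]_n) (vs : 'I_k -> 'rV[int]_n)
  (hv : Vtilde E v) (hvs : forall l : 'I_k, Vtilde E (vs l))
  (hmul : exists m : int, m != 0 /\ in_subgroup vs (m *: v)) :
  in_subgroup vs v.
Proof.
have [m [m_neq0 mv_in]] := hmul.
have [p [q v_pq]] := Vtilde_vertexB hv; rewrite v_pq in mv_in *.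
apply: in_subgroup_connect.
have vs_form l : vs l *m component_form vs E p = 0.
  have [p' [q' vs_l]] := Vtilde_vertexB (hvs l).
  rewrite vs_l joined_mul_component_form //.
  by apply/existsP; exists l; rewrite -vs_l eqxx.
have := in_subgroup_mulmx_eq0 vs_form mv_in.
rewrite -scalemxAl mulmxBl !vertex_mul_component_form // connect0.
rewrite scalerBr !scale_scalar_mx => /matrixP /(_ 0 0); rewrite !mxE eqxx !mulr1n.
rewrite -mulrBr opprB addrA subrK => /eqP; rewrite mulf_eq0 (negbTE m_neq0).
by case: connect.
Qed.
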